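(* Let $A$ and $G$ be cubic graphs. Then every graph $G\circ A^-$ has girth at least the girth $g(A)$ of $A$.
   Context: Let $G$ and $A$ be $3$-regular (simple) graphs, let $a$ be a vertex of $A$ and $A^-=A-a$. A graph $G\circ A^-$ is any graph obtained by replacing each vertex $v$ of $G$ by a copy $A^-_v$ of $A^-$ and, for each edge $uv$ of $G$, adding an edge joining a vertex of degree $2$ of $A^-_u$ to a vertex of degree $2$ of $A^-_v$, so that each degree-$2$ vertex of each copy is incident with exactly one added edge (the choices of $a$ and of these edges are arbitrary). *)

From mathcomp Require Import all_boot.
Set Implicit Arguments. Unset Strict Implicit. Unset Printing Implicit Defensive.

Definition simple_graph (T : finType) (e : rel T) : Prop :=
  symmetric e /\ irreflexive e.

Definition deg (T : finType) (e : rel T) (x : T) : nat := #|[set y | e x y]|.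

Definition cubic (T : finType) (e : rel T) : Prop :=
  simple_graph e /\ forall x, deg e x = 3.

Definition is_cycle (T : finType) (e : rel T) (s : seq T) : bool :=
  [&& 3 <= size s, uniq s & cycle e s].

Definition girth_at_least (T : finType) (e : rel T) (g : nat) : Prop :=
  forall s, is_cycle e s -> g <= size s.

Definition is_girth (T : finType) (e : rel T) (g : nat) : Prop :=
  (exists s, is_cycle e s /\ size s = g) /\ girth_at_least e g.

Definition Aminus (TA : finType) (a : TA) := {x : TA | x != a}.

Definition eAminus (TA : finType) (eA : rel TA) (a : TA) : rel (Aminus a) :=
  fun x y => eA (val x) (val y).

(* M is a valid set of added edges for G o A^- (vertex set VG * A^-):
   each added edge joins degree-2 vertices of copies A^-_u, A^-_v with uv in G,
   each edge uv of G receives exactly one added edge, and each degree-2 vertex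
   of each copy is incident with exactly one added edge. *)
Definition added_edges (TG TA : finType) (eG : rel TG) (eA : rel TA) (a : TA)
    (M : rel (TG * Aminus a)) : Prop :=
  symmetric M /\
  (forall p q, M p q ->
     [/\ eG p.1 q.1, deg (@eAminus TA eA a) p.2 = 2 & deg (@eAminus TA eA a) q.2 = 2]) /\
  (forall u v, eG u v ->
     #|[set xy : Aminus a * Aminus a | M (u, xy.1) (v, xy.2)]| = 1) /\
  (forall v (x : Aminus a), deg (@eAminus TA eA a) x = 2 ->
     #|[set q | M (v, x) q]| = 1).

Definition compose_graph (TG TA : finType) (eA : rel TA) (a : TA)
    (M : rel (TG * Aminus a)) : rel (TG * Aminus a) :=
  fun p q => ((p.1 == q.1) && @eAminus TA eA a p.2 q.2) || M p q.

(* A cycle of G o A^- either stays inside one copy A^-_v, and is then a cycle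
   of A^- ⊆ A, or it uses an added edge. In the latter case, follow it from
   the end of an added edge until it first leaves the copy again through an
   added edge. The segment inside the copy runs between two degree-2 vertices
   of A^-, i.e. between two neighbours of a in A, so closing it up through a
   gives a cycle of A that is not longer than the original one. The segment
   cannot be a single vertex since every degree-2 vertex carries only one
   added edge, and the cycle cannot return to the copy through the edge it
   came in by since added edges join distinct copies. *)
From mathcomp Require Import all_boot.

Set Implicit Arguments.
Unset Strict Implicit.
Unset Printing Implicit Defensive.

Lemma path_split_first (T : Type) (e e1 e2 : rel T) x u :
  (forall y z, e y z -> e1 y z || e2 y z) -> path e x u ->
  path e1 x u \/
  exists u1 y u2, [/\ u = u1 ++ y :: u2, path e1 x u1 & e2 (last x u1) y].
Proof.
move=> sub_e; elim: u x => [|y u IHu] x /=; first by left.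
case/andP=> /sub_e /orP[e1xy | e2xy] yu; last by right; exists [::], y, u.
have [e1yu | [u1 [z [u2 [-> e1yu1 e2z]]]]] := IHu y yu.
  by left; rewrite e1xy.
by right; exists (y :: u1), z, u2; rewrite /= e1xy.
Qed.

Lemma prev_head (T : eqType) (x : T) t : x \notin t -> prev (x :: t) x = last x t.
Proof. by move=> xNt; rewrite prev_nth mem_head memNindex // (last_nth x). Qed.

Lemma is_cycle_map (T T' : finType) (e : rel T) (e' : rel T') (f : T' -> T) s :
  {in s &, injective f} -> {homo f : x y / e' x y >-> e x y} ->
  is_cycle e' s -> is_cycle e (map f s).
Proof.
move=> f_inj f_homo /and3P[s3 s_uniq s_cycle].
rewrite /is_cycle size_map s3 map_inj_in_uniq // cycle_map.
by rewrite s_uniq; apply: sub_cycle s_cycle => y z /f_homo.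
Qed.

Lemma adj_removed_vertex (T : finType) (e : rel T) (a : T) (x : Aminus a) :
  deg (@eAminus _ e a) x < deg e (val x) -> e (val x) a.
Proof.
apply: contraTT => xNa; rewrite -leqNgt /deg.
have -> : [set y | e (val x) y] = val @: [set y | @eAminus _ e a x y].
  apply/setP=> y; rewrite inE; apply/idP/imsetP => [xy | [z]]; last first.
    by rewrite inE => xz ->.
  have yNa : y != a by apply: contraNneq xNa => ya; move: xy; rewrite ya.
  by exists (exist _ y yNa); rewrite ?inE.
by rewrite card_imset //; apply: val_inj.
Qed.

Definition fibre_rel (T1 : eqType) (T2 : Type) (e : rel T2) : rel (T1 * T2) :=
  fun p q => (p.1 == q.1) && e p.2 q.2.

Lemma fibre_path_fst (T1 T2 : eqType) (e : rel T2) (x : T1 * T2) u :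
  path (fibre_rel e) x u -> {in x :: u, forall y, y.1 = x.1}.
Proof.
elim: u x => [|z u IHu] x /=; first by move=> _ y; rewrite inE => /eqP->.
case/andP=> /andP[/eqP xz _] zu y; rewrite inE => /predU1P[-> // | yu].
by rewrite (IHu z zu y yu) xz.
Qed.

Section Composition.

Variables (TG TA : finType) (eG : rel TG) (eA : rel TA) (a : TA).
Variables (M : rel (TG * Aminus a)) (gA : nat).
Hypotheses (eG_irr : irreflexive eG) (cubicA : cubic eA).
Hypotheses (addedM : added_edges eG eA M) (girthA : girth_at_least eA gA).

Let copy_edge := fibre_rel (@eAminus _ eA a) : rel (TG * Aminus a).

Definition projA (p : TG * Aminus a) : TA := val p.2.

Lemma projA_inj_fibre (s : seq (TG * Aminus a)) v :
  {in s, forall y, y.1 = v} -> {in s &, injective projA}.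
Proof.
by move=> s_v [u x] [w y] /s_v /= -> /s_v /= -> /val_inj /= ->.
Qed.

Lemma projA_homo : {homo projA : p q / copy_edge p q >-> eA p q}.
Proof. by move=> p q /andP[]. Qed.

Lemma added_edge_functional p q1 q2 : M p q1 -> M p q2 -> q1 = q2.
Proof.
have [_ [M_deg [_ M_card]]] := addedM; move=> Mq1 Mq2.
have [_ deg2 _] := M_deg _ _ Mq1.
have /eqP/cards1P[q Mp] := M_card p.1 p.2 deg2.
rewrite -surjective_pairing in Mp.
have /[!Mp] /[!inE] /eqP -> : q1 \in [set q | M p q] by rewrite inE.
by have /[!Mp] /[!inE] /eqP -> : q2 \in [set q | M p q] by rewrite inE.
Qed.

Lemma added_edge_adj_removed p q : M p q -> eA (projA p) a.
Proof.
have [_ [M_deg _]] := addedM; case/M_deg=> _ deg2 _.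
by apply: adj_removed_vertex; rewrite deg2 cubicA.2.
Qed.

Lemma added_edge_fst_neq p q : M p q -> p.1 != q.1.
Proof.
have [_ [M_deg _]] := addedM; case/M_deg=> Gpq _ _.
by apply: contraTneq Gpq => ->; rewrite eG_irr.
Qed.

Lemma girth_copy_cycle s : is_cycle copy_edge s -> gA <= size s.
Proof.
move=> s_cycle; rewrite -(size_map projA).
apply/girthA/(is_cycle_map _ projA_homo) => //.
case: s s_cycle => [|x t] // /and3P[_ _ /= /fibre_path_fst xt].
apply: (projA_inj_fibre (v := x.1)) => y yt; apply: xt.
by rewrite -rcons_cons mem_rcons inE yt orbT.
Qed.

Lemma girth_copy_segment x u :
  path copy_edge x u -> uniq (x :: u) -> 0 < size u ->
  eA a (projA x) -> eA (projA (last x u)) a -> gA <= (size u).+2.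
Proof.
move=> xu xu_uniq u_gt0 ax la.
have xu_inj := projA_inj_fibre (fibre_path_fst xu).
have -> : (size u).+2 = size (a :: map projA (x :: u)) by rewrite /= size_map.
apply: girthA; apply/and3P; split; first by rewrite /= size_map.
  rewrite cons_uniq map_inj_in_uniq // xu_uniq andbT.
  by apply/mapP => -[q _ aq]; have /= := valP q.2; rewrite -/(projA q) -aq eqxx.
rewrite /= ax rcons_path last_map la andbT path_map.
exact: sub_path projA_homo _ _ xu.
Qed.

Lemma girth_cycle_added_edge x t :
  is_cycle (compose_graph eA M) (x :: t) -> M (last x t) x -> gA <= (size t).+1.
Proof.
case/and3P=> t2 xt_uniq /= /[!rcons_path] /andP[xt _] Mlx.
have Mxl : M x (last x t) by rewrite addedM.1.
have [xt_copy | [u1 [y [u2 [t_eq xu1 Mly]]]]] :=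
  path_split_first (e1 := copy_edge) (e2 := M) (fun _ _ => id) xt.
  by have /eqP[] := added_edge_fst_neq Mlx; rewrite (fibre_path_fst xt_copy) ?mem_last.
case: u1 t_eq xu1 Mly => [|z u1] t_eq xu1 Mly.
  move: xt_uniq t2; rewrite t_eq /= => /andP[_ /andP[yNu2 _]].
  have y_last : y = last y u2 by rewrite {1}(added_edge_functional Mly Mxl) t_eq.
  case: u2 {t_eq} y_last yNu2 => // w u2 y_last.
  by rewrite y_last /= mem_last.
have x_uniq : uniq (x :: z :: u1).
  by move: xt_uniq; rewrite t_eq -cat_cons cat_uniq => /and3P[].
have ax : eA a (projA x).
  by have [[eA_sym _] _] := cubicA; rewrite eA_sym (added_edge_adj_removed Mxl).
have := girth_copy_segment xu1 x_uniq isT ax (added_edge_adj_removed Mly).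
move/leq_trans; apply.
by rewrite t_eq size_cat /= addnS !ltnS leq_addr.
Qed.

End Composition.

Theorem proposition5p17 (TG TA : finType) (eG : rel TG) (eA : rel TA)
    (a : TA) (M : rel (TG * Aminus a)) (gA : nat) :
  cubic eG -> cubic eA -> added_edges eG eA M -> is_girth eA gA ->
  girth_at_least (compose_graph eA M) gA.
Proof.
move=> [[_ eG_irr] _] cubicA addedM [_ girthA] s s_cycle.
have /and3P[s3 s_uniq s_closed] := s_cycle.
have [/hasP[x xs Mx] | /hasPn noM] := boolP (has (fun p => M (prev s p) p) s).
  have [i t rot_s] := rot_to xs.
  have xt_cycle : is_cycle (compose_graph eA M) (x :: t).
    by rewrite -rot_s /is_cycle size_rot rot_uniq rot_cycle.
  rewrite -(size_rot i) rot_s.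
  apply: (girth_cycle_added_edge eG_irr cubicA addedM girthA xt_cycle).
  have /and3P[_ /= /andP[xNt _] _] := xt_cycle.
  by rewrite -(prev_head xNt) -rot_s prev_rot.
apply: (girth_copy_cycle girthA); rewrite /is_cycle s3 s_uniq.
apply: cycle_from_prev => // p ps.
by have /orP[] := prev_cycle s_closed ps; rewrite ?(negbTE (noM p ps)).
Qed.
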